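(* Let $T$ be a CPTP map with operator-sum representation $\{M_k\}$ and $\mathcal{H}_S$ a GAS subspace, and let $\mathcal{H}=\mathcal{H}_S\oplus\mathcal{H}_{T_1}\oplus\cdots\oplus\mathcal{H}_{T_N}$ be the decomposition produced by the DID construction started from $\mathcal{H}_S$. Then for $1\le n\le N$, $$\mathrm{supp}(T^{*n}(\Pi_S))=\mathcal{H}_S\oplus\bigoplus_{i=1}^n\mathcal{H}_{T_i},$$ and for $n>N$, $\mathrm{supp}(T^{*n}(\Pi_S))=\mathcal{H}$. In particular the DID subspaces do not depend on the chosen operator-sum representation.
   Context: $\mathcal{H}$ is a finite-dimensional complex Hilbert space; $T$ is CPTP: $T(\rho)=\sum_kM_k\rho M_k^\dagger$, $\sum_kM_k^\dagger M_k=I$, with dual $T^*(A)=\sum_kM_k^\dagger AM_k$. $\Pi_S$ is the orthogonal projection onto $\mathcal{H}_S$; $\mathrm{supp}(X)=(\ker X)^\perp$. $\mathcal{H}_S$ is invariant if $\rho\ge0$, $\mathrm{supp}(\rho)\subseteq\mathcal{H}_S$ implies $\mathrm{supp}(T(\rho))\subseteq\mathcal{H}_S$; an invariant $\mathcal{H}_S$ is GAS if $\lim_n\|T^n(\rho)-\Pi_ST^n(\rho)\Pi_S\|=0$ for every density operator $\rho$. DID construction: $\mathcal{H}_{S_1}=\mathcal{H}_S$, $\mathcal{H}_{R_1}=\mathcal{H}_S^\perp$; at step $i$, $M_{k,P'_i}=\Pi_{S_i}M_k|_{\mathcal{H}_{R_i}}:\mathcal{H}_{R_i}\to\mathcal{H}_{S_i}$,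 $\mathcal{H}_{R_{i+1}}=\bigcap_k\ker(M_{k,P'_i})$. (1) If $\mathcal{H}_{R_{i+1}}=\mathcal{H}_{R_i}$, set $\mathcal{H}_{T_i}=\mathcal{H}_{R_i}$ and stop (unsuccessful). (2) If $\mathcal{H}_{R_{i+1}}=\{0\}$, set $\mathcal{H}_{T_i}=\mathcal{H}_{R_i}$ and stop (successful). (3) Otherwise $\mathcal{H}_{T_i}$ is the orthogonal complement of $\mathcal{H}_{R_{i+1}}$ in $\mathcal{H}_{R_i}$, $\mathcal{H}_{S_{i+1}}=\mathcal{H}_{S_i}\oplus\mathcal{H}_{T_i}$, iterate. $N$ is the index of the final step. *)

(* Finite-dimensional complex Hilbert space = column vectors
   'cV[C]_n over a numeric closed field C (stand-in for the complex numbers).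
   Operators are n x n matrices acting on column vectors (v |-> A *m v).
   A subspace V of 'cV_n is represented (mxalgebra style) by a square matrix
   W : 'M_n whose ROW space is { v^T | v \in V }. *)
From HB Require Import structures.
From mathcomp Require Import all_boot all_order all_algebra.
Set Implicit Arguments. Unset Strict Implicit. Unset Printing Implicit Defensive.
Import Order.TTheory GRing.Theory Num.Theory.
Local Open Scope ring_scope.

Section QDefs.
Variable C : numClosedFieldType.
Variable n : nat.

Definition adj (p q : nat) (A : 'M[C]_(p, q)) : 'M[C]_(q, p) :=
  (map_mx Num.conj A)^T.

Definition hermitian (A : 'M[C]_n) : Prop := adj A = A.

Definition psd (A : 'M[C]_n) : Prop :=
  hermitian A /\ forall v : 'cV[C]_n, 0 <= (adj v *m A *m v) 0 0.

Definition density (rho : 'M[C]_n) : Prop := psd rho /\ \tr rho = 1.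

Definition orth_proj (P : 'M[C]_n) : Prop := hermitian P /\ P *m P = P.

Definition range_sp (A : 'M[C]_n) : 'M[C]_n := A^T.

Definition orth (W : 'M[C]_n) : 'M[C]_n := kermx (adj W).

Definition ker_sp (X : 'M[C]_n) : 'M[C]_n := kermx X^T.

Definition supp (X : 'M[C]_n) : 'M[C]_n := orth (ker_sp X).

Definition kraus (K : nat) (M : 'I_K -> 'M[C]_n) (rho : 'M[C]_n) : 'M[C]_n :=
  \sum_(k < K) M k *m rho *m adj (M k).

Definition kraus_dual (K : nat) (M : 'I_K -> 'M[C]_n) (A : 'M[C]_n) : 'M[C]_n :=
  \sum_(k < K) adj (M k) *m A *m M k.

Definition trace_preserving (K : nat) (M : 'I_K -> 'M[C]_n) : Prop :=
  \sum_(k < K) adj (M k) *m M k = 1%:M.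

Definition invariant (K : nat) (M : 'I_K -> 'M[C]_n) (P : 'M[C]_n) : Prop :=
  forall rho, psd rho -> (supp rho <= range_sp P)%MS ->
    (supp (kraus M rho) <= range_sp P)%MS.

(* a matrix norm (all norms are equivalent in finite dimension) *)
Definition mxnorm (A : 'M[C]_n) : C := \sum_i \sum_j `|A i j|.

Definition GAS (K : nat) (M : 'I_K -> 'M[C]_n) (P : 'M[C]_n) : Prop :=
  invariant M P /\
  forall rho, density rho ->
    forall eps : C, 0 < eps -> exists N0 : nat, forall m, (N0 <= m)%N ->
      mxnorm (iter m (kraus M) rho - P *m iter m (kraus M) rho *m P) < eps.

Section DID.
Variables (K : nat) (M : 'I_K -> 'M[C]_n) (P : 'M[C]_n).

(* R_{i+1} = { v in R_i | forall k, Pi_{S_i} M_k v = 0 } *)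
Definition did_nextR (Si Ri : 'M[C]_n) : 'M[C]_n :=
  (Ri :&: \bigcap_(k < K) kermx ((M k)^T *m adj Si))%MS.

Definition did_stop (Ri Rn : 'M[C]_n) : bool :=
  ((Rn == Ri)%MS || (Rn == (0 : 'M[C]_n))%MS).

Definition did_Tof (Ri Rn : 'M[C]_n) : 'M[C]_n :=
  if did_stop Ri Rn then Ri else (Ri :&: orth Rn)%MS.

(* did k = (S_{k+1}, R_{k+1}) *)
Fixpoint did (k : nat) : 'M[C]_n * 'M[C]_n :=
  match k with
  | 0 => (range_sp P, orth (range_sp P))
  | k'.+1 => let: (Si, Ri) := did k' in
             let Rn := did_nextR Si Ri in ((Si + did_Tof Ri Rn)%MS, Rn)
  end.

(* for i >= 1 *)
Definition DID_S (i : nat) : 'M[C]_n := (did i.-1).1.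
Definition DID_R (i : nat) : 'M[C]_n := (did i.-1).2.
Definition DID_T (i : nat) : 'M[C]_n := did_Tof (DID_R i) (DID_R i.+1).

Definition DID_final (N : nat) : Prop :=
  (1 <= N)%N /\ did_stop (DID_R N) (DID_R N.+1) /\
  forall i, (1 <= i < N)%N -> ~~ did_stop (DID_R i) (DID_R i.+1).

End DID.
End QDefs.

From Pilot Require Import Defs.
From HB Require Import structures.
From mathcomp Require Import all_boot all_order all_algebra.
Set Implicit Arguments. Unset Strict Implicit. Unset Printing Implicit Defensive.
Import Order.TTheory GRing.Theory Num.Theory.
Local Open Scope ring_scope.

(* Let [K_m] be the kernel of [T*^m(Pi_S)], so that [supp T*^m(Pi_S) = K_m^perp].
   Every [T*^m(Pi_S)] is a Gram operator [G^dag G]; hence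
   [K_(m+1) = {v | M_k v \in K_m for all k}], and invariance of [H_S]
   ([M_k Pi_S = Pi_S M_k Pi_S]) makes the [K_m] decrease.  This is exactly the
   DID recursion: by induction [R_(m+1) = K_m] and [S_(m+1) = K_m^perp], as
   long as the construction does not stop unsuccessfully.  It never does: a
   nonzero [R] with [R_(i+1) = R_i] is a subspace of [ker Pi_S] mapped into
   itself by every [M_k], so a state supported on it never approaches [H_S],
   contradicting GAS.  Finally [T*] is determined by [T], hence so are the
   [K_m] and with them the DID subspaces and the final index [N]. *)

Section Adjoint.
Variable C : numClosedFieldType.

Lemma adjM p q r (A : 'M[C]_(p, q)) (B : 'M[C]_(q, r)) :
  adj (A *m B) = adj B *m adj A.
Proof. by rewrite /adj map_mxM trmx_mul. Qed.

Lemma adjK p q (A : 'M[C]_(p, q)) : adj (adj A) = A.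
Proof. by apply/matrixP=> i j; rewrite /adj !mxE conjCK. Qed.

Lemma adj_tr p q (A : 'M[C]_(p, q)) : adj A^T = (adj A)^T.
Proof. by apply/matrixP=> i j; rewrite /adj !mxE. Qed.

Lemma adjD p q (A B : 'M[C]_(p, q)) : adj (A + B) = adj A + adj B.
Proof. by rewrite /adj !raddfD. Qed.

Lemma adjN p q (A : 'M[C]_(p, q)) : adj (- A) = - adj A.
Proof. by rewrite /adj !raddfN. Qed.

Lemma adj0 p q : adj (0 : 'M[C]_(p, q)) = 0.
Proof. by rewrite /adj !raddf0. Qed.

Lemma adj_mx1 p : adj (1%:M : 'M[C]_p) = 1%:M.
Proof. by apply/matrixP=> i j; rewrite /adj !mxE eq_sym rmorph_nat. Qed.

Lemma adj_scalemx p q (a : C) (A : 'M[C]_(p, q)) : adj (a *: A) = a^* *: adj A.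
Proof. by apply/matrixP=> i j; rewrite /adj !mxE rmorphM. Qed.

Lemma mxrank_adj p q (A : 'M[C]_(p, q)) : \rank (adj A) = \rank A.
Proof. by rewrite /adj mxrank_tr mxrank_map. Qed.

Lemma adj_col_mx p1 p2 q (A : 'M[C]_(p1, q)) (B : 'M[C]_(p2, q)) :
  adj (col_mx A B) = row_mx (adj A) (adj B).
Proof. by rewrite /adj map_col_mx tr_col_mx. Qed.

Lemma mul_adj_diag_ge0 m p (X : 'M[C]_(m, p)) i : 0 <= (X *m adj X) i i.
Proof.
rewrite !mxE; apply: sumr_ge0 => j _; rewrite /adj !mxE -normCK.
exact: exprn_ge0.
Qed.

Lemma sum_mul_adj_eq0 (I : eqType) (r : seq I) m p (X : I -> 'M[C]_(m, p)) :
  \sum_(k <- r) X k *m adj (X k) = 0 -> forall k, k \in r -> X k = 0.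
Proof.
move=> sum0 k kr; apply/matrixP=> i j; rewrite mxE.
have /eqP : \sum_(k <- r) (X k *m adj (X k)) i i = 0 by rewrite -summxE sum0 mxE.
rewrite psumr_eq0; last by move=> ? _; exact: mul_adj_diag_ge0.
move=> /allP/(_ k kr)/=; rewrite mxE psumr_eq0; last first.
  by move=> l _; rewrite /adj !mxE -normCK exprn_ge0.
move=> /allP/(_ j (mem_index_enum _))/=; rewrite /adj !mxE -normCK.
by rewrite expf_eq0 /= normr_eq0 => /eqP.
Qed.

Lemma mul_adj_eq0 m p (X : 'M[C]_(m, p)) : X *m adj X = 0 -> X = 0.
Proof.
move=> X0; have := @sum_mul_adj_eq0 unit [:: tt] m p (fun _ => X).
by rewrite big_seq1 => /(_ X0 tt); apply; rewrite inE.
Qed.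

Lemma mul_adj_eq0_sym m1 m2 p (A : 'M[C]_(m1, p)) (B : 'M[C]_(m2, p)) :
  A *m adj B = 0 -> B *m adj A = 0.
Proof. by move=> AB0; rewrite -[B]adjK -adjM AB0 adj0. Qed.

End Adjoint.

Section OrthogonalComplement.
Variables (C : numClosedFieldType) (n : nat).
Implicit Types S R W : 'M[C]_n.

Lemma sub_orth m (A : 'M[C]_(m, n)) W : (A <= orth W)%MS = (A *m adj W == 0).
Proof. by rewrite /orth sub_kermx. Qed.

Lemma orth_mul_adj m1 m2 (A : 'M[C]_(m1, n)) (B : 'M[C]_(m2, n)) W :
  (A <= orth W)%MS -> (B <= W)%MS -> A *m adj B = 0.
Proof. by rewrite sub_orth => /eqP AW0 /submxP [D ->]; rewrite adjM mulmxA AW0 mul0mx. Qed.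

Lemma orthS W1 W2 : (W1 <= W2)%MS -> (orth W2 <= orth W1)%MS.
Proof. by move=> sW12; rewrite sub_orth (orth_mul_adj (submx_refl _) sW12). Qed.

Lemma orth_eqmx W1 W2 : (W1 == W2)%MS -> (orth W1 == orth W2)%MS.
Proof. by case/andP=> sW12 sW21; rewrite !orthS. Qed.

Lemma sub_orthK W : (W <= orth (orth W))%MS.
Proof. by rewrite sub_orth; apply/eqP/mul_adj_eq0_sym; rewrite /orth mulmx_ker. Qed.

Lemma mxrank_orth W : \rank (orth W) = (n - \rank W)%N.
Proof. by rewrite /orth mxrank_ker mxrank_adj. Qed.

Lemma orthK W : (orth (orth W) == W)%MS.
Proof.
rewrite sub_orthK andbT.
have := mxrank_leqif_sup (sub_orthK W).
by rewrite !mxrank_orth subKn ?rank_leq_col // => -[_ <-].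
Qed.

Lemma sub_orth_eq0 m (A : 'M[C]_(m, n)) W :
  (A <= W)%MS -> (A <= orth W)%MS -> A = 0.
Proof. by move=> sAW sAoW; apply: mul_adj_eq0; exact: orth_mul_adj sAoW sAW. Qed.

Lemma addsmx_orth W : (W + orth W == 1%:M)%MS.
Proof.
rewrite submx1 /= -(mxrank_leqif_sup (submx1 _)).
have := mxrank_sum_cap W (orth W).
have -> : (W :&: orth W)%MS = 0 by apply: sub_orth_eq0; [exact: capmxSl | exact: capmxSr].
by rewrite mxrank0 addn0 mxrank_orth subnKC ?rank_leq_col // => ->; rewrite mxrank1.
Qed.

Lemma sub_orth_adds m (A : 'M[C]_(m, n)) W1 W2 :
  (A <= orth (W1 + W2)%MS)%MS = (A <= orth W1)%MS && (A <= orth W2)%MS.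
Proof.
apply/idP/andP => [sA12|[sA1 sA2]].
  by split; apply: submx_trans sA12 _; apply: orthS; [exact: addsmxSl | exact: addsmxSr].
rewrite sub_orth.
have /submxP [D ->] : ((W1 + W2)%MS <= col_mx W1 W2)%MS by rewrite addsmxE.
rewrite adjM adj_col_mx mulmxA mul_mx_row.
by rewrite (orth_mul_adj sA1 (submx_refl _)) (orth_mul_adj sA2 (submx_refl _)) row_mx0 mul0mx.
Qed.

Lemma orth0 : (orth (0 : 'M[C]_n) == 1%:M)%MS.
Proof. by rewrite /orth adj0; apply/eqmxP; exact: kermx0. Qed.

Lemma orth_adds_capmx S R1 R2 :
  (R1 == orth S)%MS -> (R2 <= R1)%MS -> (orth (S + (R1 :&: orth R2))%MS == R2)%MS.
Proof.
move=> /andP[sR1oS soSR1] sR21; apply/andP; split; last first.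
  rewrite sub_orth_adds (submx_trans sR21 sR1oS) /=.
  by apply: submx_trans (sub_orthK R2) _; apply: orthS; exact: capmxSr.
set X := orth _.
have sXR1 : (X <= R1)%MS by apply: submx_trans soSR1; apply: orthS; exact: addsmxSl.
have sXoT : (X <= orth (R1 :&: orth R2))%MS by apply: orthS; exact: addsmxSr.
have /sub_addsmxP [[a b] /= defX] : (X <= R2 + orth R2)%MS.
  by rewrite (eqmxP (addsmx_orth R2)) submx1.
set Y := b *m orth R2.
have defY : Y = X - a *m R2 by rewrite defX addrC addKr.
have sYoR2 : (Y <= orth R2)%MS by exact: submxMl.
have saR1 : (a *m R2 <= R1)%MS by apply: submx_trans sR21; exact: submxMl.
have sYT : (Y <= R1 :&: orth R2)%MS.
  by rewrite sub_capmx sYoR2 andbT defY addmx_sub // eqmx_opp.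
have XY0 : X *m adj Y = 0 := orth_mul_adj sXoT sYT.
have aY0 : (a *m R2) *m adj Y = 0.
  by apply: mul_adj_eq0_sym; apply: (orth_mul_adj sYoR2); exact: submxMl.
have Y0 : Y = 0 by apply: mul_adj_eq0; rewrite {1}defY mulmxBl XY0 aY0 subr0.
by rewrite defX -/Y Y0 addr0 submxMl.
Qed.

End OrthogonalComplement.

Section GramOperators.
Variables (C : numClosedFieldType) (n : nat).

Definition gram (A : 'M[C]_n) := exists p (G : 'M[C]_(p, n)), A = adj G *m G.

Lemma gram_mxzero : gram 0.
Proof. by exists 0%N, 0; rewrite mulmx0. Qed.

Lemma gramD A B : gram A -> gram B -> gram (A + B).
Proof.
move=> [p [G ->]] [q [H ->]]; exists (p + q)%N, (col_mx G H).
by rewrite adj_col_mx mul_row_col.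
Qed.

Lemma gram_sum I (r : seq I) (F : I -> 'M[C]_n) :
  (forall i, gram (F i)) -> gram (\sum_(i <- r) F i).
Proof. by move=> gF; elim/big_rec: _ => [|i A _]; [exact: gram_mxzero | exact: gramD]. Qed.

Lemma sub_ker_sum_gram K p m (G : 'I_K -> 'M[C]_(p, n)) (A : 'M[C]_(m, n)) :
  (A <= ker_sp (\sum_(k < K) adj (G k) *m G k))%MS = [forall k, A *m (G k)^T == 0].
Proof.
rewrite /ker_sp sub_kermx raddf_sum mulmx_sumr /=.
under eq_bigr => k _ do rewrite trmx_mul mulmxA.
apply/eqP/forallP => [sum0 k|AG0]; last first.
  by apply: big1 => k _; rewrite (eqP (AG0 k)) mul0mx.
apply/eqP/(@sum_mul_adj_eq0 _ _ (index_enum 'I_K) m p (fun k => A *m (G k)^T)).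
  rewrite -[RHS](mul0mx _ (adj A)) -sum0 mulmx_suml.
  by apply: eq_bigr => i _; rewrite adjM adj_tr !mulmxA.
exact: mem_index_enum.
Qed.

Lemma sub_ker_gram p m (G : 'M[C]_(p, n)) (A : 'M[C]_(m, n)) :
  (A <= ker_sp (adj G *m G))%MS = (A *m G^T == 0).
Proof.
have := @sub_ker_sum_gram 1 p m (fun _ => G) A; rewrite big_ord1 => ->.
by apply/forallP/idP => [/(_ ord0)|AG0 k].
Qed.

End GramOperators.

Section DualIterates.
Variables (C : numClosedFieldType) (n K : nat) (M : 'I_K -> 'M[C]_n) (P : 'M[C]_n).
Hypothesis projP : orth_proj P.

Let adjP : adj P = P. Proof. by case: projP. Qed.
Let PP : P *m P = P. Proof. by case: projP. Qed.

Lemma proj_gram : P = adj P *m P. Proof. by rewrite adjP PP. Qed.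

Lemma ker_proj : ker_sp P = orth (range_sp P).
Proof. by rewrite /ker_sp /orth /range_sp adj_tr adjP. Qed.

Lemma psd_proj : psd P.
Proof.
split=> // v; rewrite proj_gram mulmxA -adjM -mulmxA.
by have := mul_adj_diag_ge0 (adj (P *m v)) 0; rewrite adjK.
Qed.

Lemma supp_proj : (supp P <= range_sp P)%MS.
Proof. by rewrite /supp ker_proj; case/andP: (orthK (range_sp P)). Qed.

Definition ker_iter m := ker_sp (iter m (kraus_dual M) P).

Lemma gram_iter_dual m : gram (iter m (kraus_dual M) P).
Proof.
elim: m => [|m [p [G defA]]] /=; first by exists n, P; exact: proj_gram.
rewrite defA; apply: gram_sum => k; exists p, (G *m M k).
by rewrite adjM !mulmxA.
Qed.

Lemma sub_ker_iterS m q (A : 'M[C]_(q, n)) :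
  (A <= ker_iter m.+1)%MS = [forall k, A *m (M k)^T <= ker_iter m]%MS.
Proof.
have [p [G defA]] := gram_iter_dual m.
rewrite /ker_iter iterS defA /kraus_dual.
rewrite (eq_bigr (fun k => adj (G *m M k) *m (G *m M k))) => [|k _]; last first.
  by rewrite adjM !mulmxA.
rewrite sub_ker_sum_gram; apply: eq_forallb => k.
by rewrite sub_ker_gram trmx_mul mulmxA.
Qed.

Hypothesis invP : Defs.invariant M P.

(* Invariance applied to [rho = P] puts [ker P], in particular the range of
   [1 - P], inside the kernel of the Gram sum [T(P) = sum_k (M_k P)(M_k P)^dag]. *)
Lemma invariant_proj_kraus k : M k *m P = P *m M k *m P.
Proof.
have kraus_gram : kraus M P = \sum_(k < K) adj (adj (M k *m P)) *m adj (M k *m P).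
  rewrite /kraus; apply: eq_bigr => i _.
  by rewrite adjK adjM adjP -!mulmxA (mulmxA P P) PP.
have sPker : (ker_sp P <= ker_sp (kraus M P))%MS.
  rewrite ker_proj; apply: submx_trans (orthS (invP psd_proj supp_proj)) _.
  by rewrite /supp; case/andP: (orthK (ker_sp (kraus M P))).
have sQker : ((1%:M - P)^T <= ker_sp P)%MS.
  by rewrite /ker_sp sub_kermx -trmx_mul mulmxBr mulmx1 PP subrr trmx0.
have := submx_trans sQker sPker; rewrite kraus_gram sub_ker_sum_gram.
move=> /forallP /(_ k) /eqP; rewrite -trmx_mul => /(congr1 trmx).
have adjQ : adj (1%:M - P) = 1%:M - P by rewrite adjD adjN adj_mx1 adjP.
rewrite trmxK trmx0 -adjQ => /mul_adj_eq0_sym.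
by rewrite adjK mulmxBl mul1mx mulmxA => /eqP; rewrite subr_eq0 => /eqP.
Qed.

Hypothesis TP : trace_preserving M.

Lemma ker_iter1_sub0 : (ker_iter 1 <= ker_iter 0)%MS.
Proof.
have /forallP sK1 := eqbLR (sub_ker_iterS 0 (ker_iter 1)) (submx_refl _).
rewrite /ker_iter /ker_sp sub_kermx; set A := kermx _.
have PMA0 k : P *m M k *m A^T = 0.
  have := sK1 k; rewrite /ker_iter /ker_sp sub_kermx => /eqP /(congr1 trmx).
  by rewrite -/A !trmx_mul !trmxK trmx0 mulmxA.
have PMadj k : P *m adj (M k) = P *m adj (M k) *m P.
  by rewrite -[P in LHS]adjP -adjM invariant_proj_kraus !adjM adjP mulmxA.
suff PA0 : P *m A^T = 0 by rewrite -(trmxK A) -trmx_mul PA0 trmx0.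
rewrite -[P]mulmx1 -TP mulmx_sumr mulmx_suml big1 // => k _.
by rewrite mulmxA PMadj -!mulmxA (mulmxA P (M k)) PMA0 !mulmx0.
Qed.

Lemma ker_iterS_sub m : (ker_iter m.+1 <= ker_iter m)%MS.
Proof.
elim: m => [|m IHm]; first exact: ker_iter1_sub0.
rewrite sub_ker_iterS; apply/forallP => k; apply: submx_trans IHm.
by have /forallP := eqbLR (sub_ker_iterS m.+1 (ker_iter m.+2)) (submx_refl _).
Qed.

Lemma ker_iter_leq m p : (m <= p)%N -> (ker_iter p <= ker_iter m)%MS.
Proof.
move/subnKC <-; elim: (p - m)%N => [|d IHd]; first by rewrite addn0.
by rewrite addnS; exact: submx_trans (ker_iterS_sub _) IHd.
Qed.

End DualIterates.

Section DIDConstruction.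
Variables (C : numClosedFieldType) (n K : nat) (M : 'I_K -> 'M[C]_n) (P : 'M[C]_n).
Hypotheses (TP : trace_preserving M) (projP : orth_proj P) (invP : Defs.invariant M P).

Definition didS k := (did M P k).1.
Definition didR k := (did M P k).2.

Lemma didS_S k : didS k.+1 = (didS k + did_Tof (didR k) (didR k.+1))%MS.
Proof. by rewrite /didS /didR /=; case: (did M P k). Qed.

Lemma didR_S k : didR k.+1 = did_nextR M (didS k) (didR k).
Proof. by rewrite /didS /didR /=; case: (did M P k). Qed.

Lemma sub_did_nextR q (A : 'M[C]_(q, n)) S R :
  (A <= did_nextR M S R)%MS = (A <= R)%MS && [forall j, A *m (M j)^T <= orth S]%MS.
Proof.
rewrite /did_nextR sub_capmx; congr (_ && _).
apply/sub_bigcapmxP/forallP => [sAker j|sAoS j _].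
  by move: (sAker j isT); rewrite sub_kermx sub_orth mulmxA.
by move: (sAoS j); rewrite sub_kermx sub_orth mulmxA.
Qed.

Lemma didR_subS k : (didR k.+1 <= didR k)%MS.
Proof. by have := submx_refl (didR k.+1); rewrite {2}didR_S sub_did_nextR => /andP[]. Qed.

Definition did_ker_inv k :=
  (ker_iter M P k == didR k)%MS && (didR k == orth (didS k))%MS.

Lemma did_ker_inv0 : did_ker_inv 0.
Proof. by rewrite /did_ker_inv /ker_iter /= ker_proj //; apply/andP; split; apply/eqmxP. Qed.

Lemma did_ker_invS_ker k : did_ker_inv k -> (ker_iter M P k.+1 == didR k.+1)%MS.
Proof.
case/andP=> /eqmxP defK /eqmxP defR; apply/andP; split.
  rewrite didR_S sub_did_nextR -defK ker_iterS_sub //=.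
  apply/forallP => j; rewrite -defR -defK.
  by have /forallP := eqbLR (sub_ker_iterS M projP k (ker_iter M P k.+1)) (submx_refl _).
rewrite sub_ker_iterS //; apply/forallP => j; rewrite defK defR.
by have := submx_refl (didR k.+1); rewrite {2}didR_S sub_did_nextR => /andP[_ /forallP].
Qed.

Lemma did_Tof_cap k : (did_stop (didR k) (didR k.+1) -> (didR k.+1 == (0 : 'M[C]_n))%MS) ->
  (did_Tof (didR k) (didR k.+1) == didR k :&: orth (didR k.+1))%MS.
Proof.
move=> stop0; rewrite /did_Tof; case: ifP => [/stop0 R0|_]; last by apply/eqmxP.
have full_oR : row_full (orth (didR k.+1)).
  by rewrite /row_full mxrank_orth (eqmx_rank R0) mxrank0 subn0.
by apply/eqmxP/eqmx_sym; exact: capmxT.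
Qed.

Lemma did_ker_invS k : did_ker_inv k ->
  (did_stop (didR k) (didR k.+1) -> (didR k.+1 == (0 : 'M[C]_n))%MS) -> did_ker_inv k.+1.
Proof.
move=> invk stop0; rewrite /did_ker_inv (did_ker_invS_ker invk) /= didS_S.
have eqST : (didS k + did_Tof (didR k) (didR k.+1) ==
              didS k + (didR k :&: orth (didR k.+1)))%MS.
  by apply/eqmxP/adds_eqmx => //; apply/eqmxP/did_Tof_cap.
have /andP[_ defR] := invk.
apply/eqmxP/eqmx_sym.
exact: eqmx_trans (eqmxP (orth_eqmx eqST)) (eqmxP (orth_adds_capmx defR (didR_subS k))).
Qed.

End DIDConstruction.

Section States.
Variables (C : numClosedFieldType) (n : nat).

Lemma norm_mxtrace_le (X : 'M[C]_n) : `|\tr X| <= mxnorm X.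
Proof.
rewrite /mxnorm /mxtrace; apply: le_trans (ler_norm_sum _ _ _) _.
apply: ler_sum => i _; rewrite (bigD1 i) //= lerDl.
by apply: sumr_ge0 => j _; exact: normr_ge0.
Qed.

Definition rank1_state (u : 'rV[C]_n) : 'M[C]_n :=
  ((u *m adj u) 0 0)^-1 *: (u^T *m adj u^T).

Lemma density_rank1_state u : u != 0 -> density (rank1_state u).
Proof.
move=> u_neq0; set c := (u *m adj u) 0 0.
have c_ge0 : 0 <= c by exact: mul_adj_diag_ge0.
have c_neq0 : c != 0.
  apply: contra u_neq0 => /eqP c0; apply/eqP/mul_adj_eq0.
  by apply/matrixP => i j; rewrite !ord1 [RHS]mxE.
split; last first.
  rewrite /rank1_state -/c mxtraceZ mxtrace_mulC trace_mx11 adj_tr -trmx_mul.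
  by rewrite [_^T 0 0]mxE -/c mulVf.
split=> [|w].
  rewrite /Defs.hermitian /rank1_state adj_scalemx adjM adjK fmorphV.
  by congr (_^-1 *: _); exact: geC0_conj.
rewrite /rank1_state -scalemxAr -scalemxAl mxE.
apply: mulr_ge0; first by rewrite invr_ge0.
have -> : adj w *m (u^T *m adj u^T) *m w = (adj w *m u^T) *m adj (adj w *m u^T).
  by rewrite adjM adjK !mulmxA.
exact: mul_adj_diag_ge0.
Qed.

Lemma sub_rank1_state u (R : 'M[C]_n) : (u <= R)%MS -> ((rank1_state u)^T <= R)%MS.
Proof.
move=> suR; rewrite /rank1_state linearZ /= trmx_mul trmxK scalemx_sub //.
by rewrite trmxK; apply: submx_trans suR; exact: submxMl.
Qed.

End States.

Section KrausStable.
Variables (C : numClosedFieldType) (n K : nat) (M : 'I_K -> 'M[C]_n) (P : 'M[C]_n).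
Hypothesis TP : trace_preserving M.

Lemma mxtrace_kraus X : \tr (kraus M X) = \tr X.
Proof.
rewrite /kraus raddf_sum /=.
under eq_bigr => j _ do rewrite mxtrace_mulC mulmxA.
by rewrite -raddf_sum -mulmx_suml TP mul1mx.
Qed.

Lemma kraus_stable (R : 'M[C]_n) X :
  (forall j, (R *m (M j)^T <= R)%MS) -> (X^T <= R)%MS -> ((kraus M X)^T <= R)%MS.
Proof.
move=> stR sXR; rewrite /kraus raddf_sum /=; apply: summx_sub => j _.
rewrite !trmx_mul mulmxA; apply: submx_trans (stR j).
by apply: submxMr; apply: submx_trans sXR; exact: submxMl.
Qed.

(* A state supported in a subspace of [ker P] that every Kraus operator
   preserves stays there forever, hence never approaches [H_S]. *)
Lemma GAS_stable_ker_eq0 (R : 'M[C]_n) :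
  GAS M P -> (R <= ker_sp P)%MS -> (forall j, (R *m (M j)^T <= R)%MS) -> R = 0.
Proof.
move=> [_ gasP] sRker stR; apply/row_matrixP => i; rewrite row0.
apply/eqP/negP => /negP ui_neq0; set rho := rank1_state (row i R).
have sR m : ((iter m (kraus M) rho)^T <= R)%MS.
  by elim: m => [|m IHm] /=; [exact/sub_rank1_state/row_sub | exact: kraus_stable].
have P_iter0 m : P *m iter m (kraus M) rho = 0.
  have := submx_trans (sR m) sRker; rewrite /ker_sp sub_kermx -trmx_mul.
  by move=> /eqP /(congr1 trmx); rewrite trmxK trmx0.
have tr_iter m : \tr (iter m (kraus M) rho) = 1.
  by elim: m => [|m IHm] /=; [case: (density_rank1_state ui_neq0) | rewrite mxtrace_kraus].
have [N0 closeN0] := gasP rho (density_rank1_state ui_neq0) 1 ltr01.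
have := closeN0 N0 (leqnn _); rewrite P_iter0 mul0mx subr0.
have := norm_mxtrace_le (iter N0 (kraus M) rho); rewrite tr_iter normr1.
by move=> /le_lt_trans/[apply]; rewrite ltxx.
Qed.

End KrausStable.

Section DIDUnderGAS.
Variables (C : numClosedFieldType) (n K : nat) (M : 'I_K -> 'M[C]_n) (P : 'M[C]_n).
Hypotheses (TP : trace_preserving M) (projP : orth_proj P) (gasP : GAS M P).

Let invP : Defs.invariant M P. Proof. by case: gasP. Qed.

Lemma did_stop_eq0 k : did_ker_inv M P k -> did_stop (didR M P k) (didR M P k.+1) ->
  (didR M P k.+1 == (0 : 'M[C]_n))%MS.
Proof.
move=> invk /orP[/andP[_ sRRS]|//]; have /andP[/eqmxP defK /eqmxP defR] := invk.
suff R0 : didR M P k = 0 by rewrite sub0mx andbT -R0 didR_subS.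
apply: (GAS_stable_ker_eq0 TP gasP) => [|j].
  by rewrite -defK; exact: (ker_iter_leq projP invP TP (leq0n k)).
have := sRRS; rewrite didR_S sub_did_nextR => /andP[_ /forallP/(_ j)].
by rewrite -defR.
Qed.

Lemma did_ker_inv_all k : did_ker_inv M P k.
Proof.
elim: k => [|k IHk]; first exact: (did_ker_inv0 M projP).
by apply: (did_ker_invS TP projP invP IHk); exact: did_stop_eq0.
Qed.

Lemma ker_iter_didR k : (ker_iter M P k == didR M P k)%MS.
Proof. by case/andP: (did_ker_inv_all k). Qed.

Lemma supp_iter_dual m : (supp (iter m (kraus_dual M) P) == didS M P m)%MS.
Proof.
have /andP[/eqmxP defK /eqmxP defR] := did_ker_inv_all m.
apply/eqmxP; apply: eqmx_trans (eqmxP (orthK (didS M P m))).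
by apply/eqmxP/orth_eqmx/eqmxP; exact: eqmx_trans defK defR.
Qed.

Lemma DID_T_ker i : (1 <= i)%N ->
  (DID_T M P i == ker_iter M P i.-1 :&: orth (ker_iter M P i))%MS.
Proof.
case: i => // i _; rewrite /DID_T /DID_R /=.
apply/eqmxP; apply: eqmx_trans (eqmxP (did_Tof_cap (did_stop_eq0 (did_ker_inv_all i)))) _.
apply: cap_eqmx; first exact/eqmx_sym/eqmxP/ker_iter_didR.
exact/eqmx_sym/eqmxP/orth_eqmx/ker_iter_didR.
Qed.

Lemma DID_final_ker N : DID_final M P N ->
  [/\ (1 <= N)%N, (ker_iter M P N == (0 : 'M[C]_n))%MS &
      forall j, (1 <= j < N)%N -> ~~ (ker_iter M P j == (0 : 'M[C]_n))%MS].
Proof.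
case: N => [[]//|N [_ [stopN runs]]]; split=> // [|j /[dup] j_range /runs].
  apply/eqmxP; apply: eqmx_trans (eqmxP (ker_iter_didR N.+1)) _.
  exact/eqmxP/(did_stop_eq0 (did_ker_inv_all N)).
case: j j_range => // j _; rewrite /DID_R /did_stop /= negb_or => /andP[_].
apply: contra => /eqmxP K0; apply/eqmxP.
exact: eqmx_trans (eqmx_sym (eqmxP (ker_iter_didR j.+1))) K0.
Qed.

Lemma supp_iter_dual_full N m : DID_final M P N -> (N < m)%N ->
  (supp (iter m (kraus_dual M) P) == 1%:M)%MS.
Proof.
move=> /DID_final_ker [_ /andP[KN0 _] _] ltNm; rewrite submx1 /=.
have Km0 : (ker_iter M P m <= (0 : 'M[C]_n))%MS.
  exact: submx_trans (ker_iter_leq projP invP TP (ltnW ltNm)) KN0.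
apply: submx_trans (orthS Km0); by case/andP: (orth0 C n).
Qed.

End DIDUnderGAS.

Lemma didS_sum (C : numClosedFieldType) n K (M : 'I_K -> 'M[C]_n) (P : 'M[C]_n) m :
  (didS M P m == DID_S M P 1 + \sum_(1 <= i < m.+1) DID_T M P i)%MS.
Proof.
elim: m => [|m IHm]; first by rewrite big_geq //; apply/eqmxP/eqmx_sym/addsmx0.
rewrite big_nat_recr // didS_S addsmxA.
by apply/eqmxP/adds_eqmx; [exact/eqmxP | rewrite /DID_T /DID_R].
Qed.

Lemma mxtrace_mul_delta (C : numClosedFieldType) n (B : 'M[C]_n) i j :
  \tr (B *m delta_mx j i) = B i j.
Proof.
rewrite /mxtrace (bigD1 i) //= big1 ?addr0 => [|k k_neq_i].
  rewrite mxE (bigD1 j) //= big1 ?addr0 => [|l l_neq_j]; first by rewrite mxE !eqxx mulr1.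
  by rewrite mxE (negbTE l_neq_j) mulr0.
by rewrite mxE big1 // => l _; rewrite mxE (negbTE k_neq_i) andbF mulr0.
Qed.

Lemma kraus_dualE (C : numClosedFieldType) n K (M : 'I_K -> 'M[C]_n) A i j :
  kraus_dual M A i j = \tr (A *m kraus M (delta_mx j i)).
Proof.
rewrite -mxtrace_mul_delta /kraus_dual /kraus mulmx_sumr mulmx_suml !raddf_sum.
by apply: eq_bigr => k _; rewrite !mulmxA [RHS]mxtrace_mulC !mulmxA.
Qed.

Section SameChannel.
Variables (C : numClosedFieldType) (n K K' : nat) (P : 'M[C]_n).
Variables (M : 'I_K -> 'M[C]_n) (M' : 'I_K' -> 'M[C]_n).
Hypothesis eqT : forall rho, kraus M' rho = kraus M rho.

Lemma ker_iter_eq m : ker_iter M' P m = ker_iter M P m.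
Proof.
have eq_dual A : kraus_dual M' A = kraus_dual M A.
  by apply/matrixP => i j; rewrite !kraus_dualE eqT.
have eq_iter : iter m (kraus_dual M') P = iter m (kraus_dual M) P.
  by elim: m => //= m ->; exact: eq_dual.
by rewrite /ker_iter eq_iter.
Qed.

Lemma GAS_eq : GAS M P -> GAS M' P.
Proof.
have eq_iter m rho : iter m (kraus M') rho = iter m (kraus M) rho.
  by elim: m => //= m ->; exact: eqT.
case=> invP gasP; split=> [rho psd_rho supp_rho|rho dens_rho]; first by rewrite eqT; exact: invP.
move=> eps eps_gt0; have [N0 closeN0] := gasP rho dens_rho eps eps_gt0.
by exists N0 => m leN0m; rewrite eq_iter; exact: closeN0.
Qed.

Hypotheses (TP : trace_preserving M) (TP' : trace_preserving M').
Hypotheses (projP : orth_proj P) (gasP : GAS M P).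

Lemma DID_final_eq N N' : DID_final M P N -> DID_final M' P N' -> N' = N.
Proof.
move=> /(DID_final_ker TP projP gasP) [N_ge1 KN0 KnN].
move=> /(DID_final_ker TP' projP (GAS_eq gasP)) [N'_ge1 KN'0 KnN'].
case: (ltngtP N' N) => // [ltN'N|ltNN'].
  by have := KnN N'; rewrite N'_ge1 ltN'N -ker_iter_eq KN'0 => /(_ isT).
by have := KnN' N; rewrite N_ge1 ltNN' ker_iter_eq KN0 => /(_ isT).
Qed.

Lemma DID_T_eq i : (1 <= i)%N -> (DID_T M' P i == DID_T M P i)%MS.
Proof.
move=> i_ge1; apply/eqmxP.
apply: eqmx_trans (eqmxP (DID_T_ker TP' projP (GAS_eq gasP) i_ge1)) _.
by rewrite !ker_iter_eq; exact/eqmx_sym/eqmxP/(DID_T_ker TP projP gasP i_ge1).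
Qed.

End SameChannel.

Theorem proposition6 (C : numClosedFieldType) (n K : nat)
    (M : 'I_K -> 'M[C]_n) (P : 'M[C]_n) (N : nat) :
  trace_preserving M -> orth_proj P -> GAS M P -> DID_final M P N ->
  (forall m, (1 <= m <= N)%N ->
     (supp (iter m (kraus_dual M) P) ==
        DID_S M P 1 + \sum_(1 <= i < m.+1) DID_T M P i)%MS) /\
  (forall m, (N < m)%N -> (supp (iter m (kraus_dual M) P) == 1%:M)%MS) /\
  (forall (K' : nat) (M' : 'I_K' -> 'M[C]_n) (N' : nat),
     trace_preserving M' -> (forall rho, kraus M' rho = kraus M rho) ->
     DID_final M' P N' ->
     N' = N /\ forall i, (1 <= i <= N)%N -> (DID_T M' P i == DID_T M P i)%MS).
Proof.
move=> TP projP gasP finN; split; [|split].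
- move=> m _; apply/eqmxP.
  exact: eqmx_trans (eqmxP (supp_iter_dual TP projP gasP m)) (eqmxP (didS_sum M P m)).
- by move=> m; exact: (supp_iter_dual_full TP projP gasP finN).
- move=> K' M' N' TP' eqT finN'; split.
    exact: (DID_final_eq eqT TP TP' projP gasP finN finN').
  by move=> i /andP[i_ge1 _]; exact: (DID_T_eq eqT TP TP' projP gasP i_ge1).
Qed.
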